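(* Let $G$ be a connected reflexive graph and let $a,b$ be vertices of $G$ at distance at least $4$ in $G$. Let $G+E$ be the graph obtained from $G$ by adding the edge $E=ab$. Then $H_1(\mathbf{G}+\mathbf{E})\cong H_1(\mathbf{G})\oplus\mathbb{Z}$. More precisely, the map induced by inclusion embeds $H_1(\mathbf{G})$ into $H_1(\mathbf{G}+\mathbf{E})$, and for any closed walk $C$ in $G+E$ that traverses the edge $E$ exactly once, $H_1(\mathbf{G}+\mathbf{E})$ is the direct sum of the image of $H_1(\mathbf{G})$ and the infinite cyclic subgroup generated by $[C]$; in particular, a basis of $H_1(\mathbf{G})$ (when free) together with $[C]$ is a basis of $H_1(\mathbf{G}+\mathbf{E})$.
   Context: A graph is reflexive if every vertex has a loop. For a reflexive graph $G$, its clique complex $\mathbf{G}$ has as $n$-simplices the ordered $(n+1)$-tuples of vertices that are pairwise adjacent or equal; $C_n(\mathbf{G})$ is the free abelian group on the $n$-simplices with boundary $\delta_n[v_0,\dots,v_n]=\sum_i(-1)^i[v_0,\dots,\hat v_i,\dots,v_n]$, and $H_1(\mathbf{G})=\ker\delta_1/\operatorname{im}\delta_2$. A closed walk $(x_0,\dots,x_\ell,x_0)$ is identified with the $1$-cycle $\sum[x_i,x_{i+1}]$ and $[C]$ denotes its homology class. *)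

From mathcomp Require Import all_boot all_order all_algebra.
Set Implicit Arguments. Unset Strict Implicit. Unset Printing Implicit Defensive.
Import GRing.Theory.
Local Open Scope ring_scope.

(* Formal Z-linear combinations: a chain over simplex type S is a finite list
   of (coefficient, simplex) pairs; two chains are equal as elements of the
   free abelian group iff all their coefficients agree (chain_eq). *)
Definition chain (S : Type) := seq (int * S).

Definition coef (S : eqType) (c : chain S) (s : S) : int :=
  \sum_(p <- c | p.2 == s) p.1.

Definition chain_eq (S : eqType) (c d : chain S) : Prop :=
  forall s, coef c s = coef d s.

Definition chain_scale (S : Type) (n : int) (c : chain S) : chain S :=
  [seq (n * p.1, p.2) | p <- c].

Section Complex.
Variable V : eqType.

Definition bd1 (c : chain (V * V)) : chain V :=
  flatten [seq [:: (p.1, p.2.2); (- p.1, p.2.1)] | p <- c].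

Definition bd2 (c : chain (V * V * V)) : chain (V * V) :=
  flatten [seq [:: (p.1, (p.2.1.2, p.2.2)); (- p.1, (p.2.1.1, p.2.2));
                   (p.1, (p.2.1.1, p.2.1.2))] | p <- c].

(* 1-simplices of the clique complex of the reflexive graph with adjacency e *)
Definition edge_chain (e : rel V) (c : chain (V * V)) : bool :=
  all (fun p => e p.2.1 p.2.2) c.

(* 2-simplices: ordered triples pairwise adjacent (or equal; loops present) *)
Definition tri_chain (e : rel V) (c : chain (V * V * V)) : bool :=
  all (fun p => [&& e p.2.1.1 p.2.1.2, e p.2.1.2 p.2.2 & e p.2.1.1 p.2.2]) c.

Definition is_cycle1 (c : chain (V * V)) : Prop := chain_eq (bd1 c) [::].

Definition is_boundary (e : rel V) (z : chain (V * V)) : Prop :=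
  exists w : chain (V * V * V), tri_chain e w /\ chain_eq z (bd2 w).

Definition reflexive_graph (e : rel V) : Prop := reflexive e /\ symmetric e.

Definition connected (e : rel V) : Prop :=
  forall x y : V, exists p : seq V, path e x p /\ last x p = y.

Definition dist_ge4 (e : rel V) (a b : V) : Prop :=
  forall p : seq V, path e a p -> last a p = b -> (4 <= size p)%N.

Definition add_edge (e : rel V) (a b : V) : rel V :=
  fun x y => [|| e x y, (x == a) && (y == b) | (x == b) && (y == a)].

(* closed walk (x_0, ..., x_l, x_0) given by the list [:: x_0; ...; x_l]:
   its ordered steps and its associated 1-chain sum [x_i, x_{i+1}] *)
Definition walk_steps (w : seq V) : seq (V * V) := zip w (rot 1 w).
Definition walk_chain (w : seq V) : chain (V * V) :=
  [seq (1%:Z, s) | s <- walk_steps w].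
Definition closed_walk (e : rel V) (w : seq V) : bool := (w != [::]) && cycle e w.
Definition traversals (a b : V) (w : seq V) : nat :=
  count (fun s => (s == (a, b)) || (s == (b, a))) (walk_steps w).

End Complex.

(* Since a and b are at distance at least 4, a triangle of G+E either lies in G
   or has all its vertices in {a, b}.  Hence the cochain that is 1 on (a, b),
   -1 on (b, a) and 0 elsewhere is a cocycle of G+E vanishing on G; it takes
   the value +-1 on a closed walk C crossing E once, which makes the
   coefficient of [C] unique.  Conversely, subtracting the right multiple of
   [C] from a cycle of G+E equalises its coefficients on (a, b) and (b, a), and
   the triangle [a, b, a] then trades them for the loop [a, a] of G.
   Injectivity: a filling in G+E of a cycle of G becomes a filling in G once
   every triangle on {a, b} is replaced by degenerate triangles. *)

From mathcomp Require Import all_boot all_order all_algebra.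
From mathcomp Require Import ring.
Set Implicit Arguments. Unset Strict Implicit. Unset Printing Implicit Defensive.
Import GRing.Theory.
Local Open Scope ring_scope.

Definition pairing (S : Type) (f : S -> int) (c : chain S) : int :=
  \sum_(p <- c) p.1 * f p.2.

Section Pairing.
Variable S : eqType.
Implicit Types (f g : S -> int) (c d : chain S).

Lemma pairing_cat f c d : pairing f (c ++ d) = pairing f c + pairing f d.
Proof. exact: big_cat. Qed.

Lemma pairing_scale f n c : pairing f (chain_scale n c) = n * pairing f c.
Proof.
by rewrite /pairing big_map mulr_sumr; apply: eq_bigr => p _; rewrite mulrA.
Qed.

Lemma pairing0 c : pairing (fun _ => 0) c = 0.
Proof. by apply: big1 => p _; rewrite mulr0. Qed.

Lemma coef_pairing c s : coef c s = pairing (fun q => (q == s)%:R) c.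
Proof.
rewrite /coef big_mkcond; apply: eq_bigr => p _.
by case: eqP; rewrite ?mulr1 ?mulr0.
Qed.

Lemma pairing_coef_sum (L : seq S) f c : uniq L -> {subset map snd c <= L} ->
  pairing f c = \sum_(s <- L) coef c s * f s.
Proof.
move=> uL cL; rewrite /pairing (eq_big_seq (fun p =>
  \sum_(s <- L) if p.2 == s then p.1 * f s else 0)); last first.
  move=> p pc; rewrite (bigD1_seq p.2) ?cL ?map_f //= eqxx big1 ?addr0 //.
  by move=> s /negbTE; rewrite eq_sym => ->.
rewrite exchange_big; apply: eq_bigr => s _.
by rewrite /coef mulr_suml [RHS]big_mkcond.
Qed.

Lemma chain_eqP c d : chain_eq c d <-> forall f, pairing f c = pairing f d.
Proof.
rewrite /chain_eq; split=> [cd f | cd s]; last by rewrite !coef_pairing cd.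
have uL := undup_uniq (map snd (c ++ d)).
rewrite !(pairing_coef_sum f uL) => [|q|q].
  by apply: eq_bigr => s _; rewrite cd.
all: by rewrite mem_undup map_cat mem_cat => ->; rewrite ?orbT.
Qed.

Lemma eq_pairing_all (P : pred S) f g c :
  all (fun p => P p.2) c -> (forall q, P q -> f q = g q) -> pairing f c = pairing g c.
Proof. by move=> cP fg; apply: eq_big_seq => p pc; rewrite fg //; apply: (allP cP). Qed.

Lemma pairing_split2 s t f c : s != t ->
  pairing f c = pairing f [seq p <- c | ~~ ((p.2 == s) || (p.2 == t))]
                + coef c s * f s + coef c t * f t.
Proof.
move=> st; rewrite /pairing big_filter.
rewrite [LHS](bigID (fun p => (p.2 == s) || (p.2 == t))).
rewrite /= addrC -addrA; congr (_ + _).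
rewrite (bigID (fun p => p.2 == s)) /= /coef !mulr_suml.
congr (_ + _).
  rewrite (eq_bigl (fun p => p.2 == s)) => [|p]; last first.
    by case: (p.2 == s); rewrite ?andbF.
  by apply: eq_bigr => p /eqP->.
rewrite (eq_bigl (fun p => p.2 == t)) => [|p]; last first.
  by case: (eqVneq p.2 s) => [->|]; rewrite ?(negbTE st) ?andbT.
by apply: eq_bigr => p /eqP->.
Qed.
End Pairing.

Section Cochains.
Variable V : eqType.
Implicit Types (g : V -> int) (f : V * V -> int).

Definition cobd1 g (q : V * V) : int := g q.2 - g q.1.

Definition cobd2 f (t : V * V * V) : int :=
  f (t.1.2, t.2) - f (t.1.1, t.2) + f (t.1.1, t.1.2).

Lemma pairing_bd1 g c : pairing g (bd1 c) = pairing (cobd1 g) c.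
Proof.
rewrite /pairing /bd1 big_flatten big_map; apply: eq_bigr => p _.
by rewrite !big_cons big_nil /cobd1 /=; ring.
Qed.

Lemma pairing_bd2 f w : pairing f (bd2 w) = pairing (cobd2 f) w.
Proof.
rewrite /pairing /bd2 big_flatten big_map; apply: eq_bigr => p _.
by rewrite !big_cons big_nil /cobd2 /=; ring.
Qed.

Lemma cobd2_cobd1 g t : cobd2 (cobd1 g) t = 0.
Proof. by rewrite /cobd2 /cobd1 /=; ring. Qed.

Lemma cobd2_cobd1_pairing g w : pairing (cobd2 (cobd1 g)) w = 0.
Proof. by apply: big1 => p _; rewrite cobd2_cobd1 mulr0. Qed.

Lemma is_cycle1P c : is_cycle1 c <-> forall g, pairing (cobd1 g) c = 0.
Proof.
rewrite /is_cycle1 chain_eqP.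
split=> cyc g; [rewrite -pairing_bd1 | rewrite pairing_bd1];
  by rewrite cyc /pairing big_nil.
Qed.

Lemma pairing_walk_chain f (w : seq V) :
  pairing f (walk_chain w) = \sum_(s <- walk_steps w) f s.
Proof. by rewrite /pairing big_map; apply: eq_bigr => s _; rewrite mul1r. Qed.

Lemma is_cycle1_cat_scale (c d : chain (V * V)) (n : int) :
  is_cycle1 c -> is_cycle1 d -> is_cycle1 (c ++ chain_scale n d).
Proof.
move=> /is_cycle1P cc /is_cycle1P cd; apply/is_cycle1P => g.
by rewrite pairing_cat pairing_scale cc cd mulr0 addr0.
Qed.

Lemma walk_chain_cycle (w : seq V) : is_cycle1 (walk_chain w).
Proof.
apply/is_cycle1P => g; rewrite pairing_walk_chain /walk_steps /cobd1 sumrB.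
rewrite -(big_map snd predT g) -(big_map fst predT g).
rewrite -/(unzip2 _) -/(unzip1 _) unzip2_zip ?unzip1_zip ?size_rot //.
by rewrite (perm_big _ (_ : perm_eq (rot 1 w) w)) ?subrr // perm_rot.
Qed.
End Cochains.

Section EdgeChains.
Variable V : eqType.

Lemma all_zip_rcons (e : rel V) x p y :
  all (fun s => e s.1 s.2) (zip (x :: p) (rcons p y)) = path e x (rcons p y).
Proof. by elim: p x => [|z p IH] x //=; rewrite IH. Qed.

Lemma edge_chain_walk (e : rel V) w :
  closed_walk e w -> edge_chain e (walk_chain w).
Proof.
case: w => [|x w] //= /andP[_ ew].
rewrite /edge_chain all_map /walk_steps rot1_cons.
by move: ew; rewrite /= -all_zip_rcons.
Qed.

Lemma edge_chain_cat (e : rel V) c d :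
  edge_chain e (c ++ d) = edge_chain e c && edge_chain e d.
Proof. exact: all_cat. Qed.

Lemma edge_chain_scale (e : rel V) n c :
  edge_chain e (chain_scale n c) = edge_chain e c.
Proof. by rewrite /edge_chain all_map. Qed.
End EdgeChains.

Section AddEdge.
Variables (V : eqType) (adj : rel V) (a b : V).
Hypotheses (adj_refl : reflexive adj) (adj_sym : symmetric adj).
Hypothesis dist_ab : dist_ge4 adj a b.
Local Notation adjE := (add_edge adj a b).

Definition is_E (q : V * V) : bool := (q == (a, b)) || (q == (b, a)).

Definition E_cochain (q : V * V) : int := (q == (a, b))%:R - (q == (b, a))%:R.

Definition mask_E (f : V * V -> int) (q : V * V) : int := if is_E q then 0 else f q.

Lemma neq_ab : a != b.
Proof.
by apply/eqP => ab; have := @dist_ab [::]; rewrite /= ab => /(_ isT erefl).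
Qed.

Lemma neq_ba : b != a.
Proof. by rewrite eq_sym neq_ab. Qed.

Lemma neq_ab_ba : (a, b) != (b, a).
Proof. by rewrite xpair_eqE negb_and neq_ab. Qed.

Lemma no_common_neighbour x : adj x a -> adj x b -> False.
Proof.
move=> xa xb; have := @dist_ab [:: x; b].
by rewrite /= adj_sym xa xb => /(_ isT erefl).
Qed.

Lemma adj_not_E u v : adj u v -> ~~ is_E (u, v).
Proof.
move=> uv; apply/negP => /orP[] /eqP[eu ev]; rewrite eu ev in uv.
  exact: (no_common_neighbour (adj_refl a) uv).
exact: (no_common_neighbour uv (adj_refl b)).
Qed.

Lemma add_edge_adj u v : adjE u v -> ~~ is_E (u, v) -> adj u v.
Proof.
by rewrite /is_E !xpair_eqE => /or3P[// | uv | uv]; rewrite uv ?orbT.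
Qed.

Lemma add_edge_sym : symmetric adjE.
Proof.
move=> u v; rewrite /add_edge adj_sym (andbC (u == a)) (andbC (u == b)).
by rewrite [_ && _ || _]orbC.
Qed.

Lemma triangle_apex x y z : x \notin [:: a; b] ->
  adjE x y -> adjE x z -> adjE y z -> [&& adj x y, adj x z & adj y z].
Proof.
have adj_out u v : u \notin [:: a; b] -> adjE u v -> adj u v.
  move=> uab /add_edge_adj; apply; apply: contra uab.
  by rewrite !inE => /orP[] /eqP[-> _]; rewrite eqxx ?orbT.
move=> xab /(adj_out _ _ xab) xy /(adj_out _ _ xab) xz yz; rewrite xy xz /=.
apply: (add_edge_adj yz); apply/negP => /orP[] /eqP[ey ez]; rewrite ey ez in xy xz.
  exact: (no_common_neighbour xy xz).
exact: (no_common_neighbour xz xy).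
Qed.

Lemma add_edge_triangle x y z : adjE x y -> adjE y z -> adjE x z ->
  [&& adj x y, adj y z & adj x z] \/
  [/\ x \in [:: a; b], y \in [:: a; b] & z \in [:: a; b]].
Proof.
move=> xy yz xz; have flip u v : adjE u v -> adjE v u by rewrite add_edge_sym.
have [xab|/triangle_apex apex] := boolP (x \in [:: a; b]); last first.
  by have /and3P[-> -> ->] := apex y z xy xz yz; left.
have [yab|/triangle_apex apex] := boolP (y \in [:: a; b]); last first.
  have /and3P[yx -> ->] := apex x z (flip _ _ xy) yz xz.
  by left; rewrite adj_sym yx.
have [zab|/triangle_apex apex] := boolP (z \in [:: a; b]); first by right.
have /and3P[zx zy ->] := apex x y (flip _ _ xz) (flip _ _ yz) xy.
by left; rewrite adj_sym zy adj_sym zx.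
Qed.

Lemma E_cochain_adj u v : adj u v -> E_cochain (u, v) = 0.
Proof.
by move/adj_not_E; rewrite /E_cochain /is_E negb_or => /andP[/negbTE-> /negbTE->].
Qed.

Lemma mask_E_adj f u v : adj u v -> mask_E f (u, v) = f (u, v).
Proof. by move/adj_not_E/negbTE; rewrite /mask_E => ->. Qed.

Lemma E_cochain_ab u v : u \in [:: a; b] -> v \in [:: a; b] ->
  E_cochain (u, v) = cobd1 (fun x => (x == b)%:R) (u, v).
Proof.
rewrite !inE => /orP[]/eqP-> /orP[]/eqP->; rewrite /E_cochain /cobd1 /=;
  by rewrite !xpair_eqE !eqxx ?(negbTE neq_ab) ?(negbTE neq_ba).
Qed.

Lemma mask_E_ab f u v : u \in [:: a; b] -> v \in [:: a; b] ->
  mask_E f (u, v) = if u == v then f (v, v) else 0.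
Proof.
rewrite !inE => /orP[]/eqP-> /orP[]/eqP->; rewrite /mask_E /is_E;
  by rewrite !xpair_eqE !eqxx ?(negbTE neq_ab) ?(negbTE neq_ba).
Qed.

Definition triangleE (t : V * V * V) : bool :=
  [&& adjE t.1.1 t.1.2, adjE t.1.2 t.2 & adjE t.1.1 t.2].

Lemma cobd2_E_cochain t : triangleE t -> cobd2 E_cochain t = 0.
Proof.
case: t => [[x y] z] /and3P[xy yz xz].
have [/and3P[xy' yz' xz'] | [xab yab zab]] := add_edge_triangle xy yz xz.
  by rewrite /cobd2 /= !E_cochain_adj // !subrr.
by rewrite /cobd2 /= !E_cochain_ab //; apply: (cobd2_cobd1 _ (x, y, z)).
Qed.

Lemma pairing_E_cochain_boundary c : is_boundary adjE c -> pairing E_cochain c = 0.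
Proof.
case=> w [Tw /chain_eqP->]; rewrite pairing_bd2 -(pairing0 w).
exact: (eq_pairing_all (P := triangleE)) cobd2_E_cochain.
Qed.

Lemma pairing_E_cochain_edge_chain c : edge_chain adj c -> pairing E_cochain c = 0.
Proof.
move=> Ec; rewrite -(pairing0 c).
by apply: (eq_pairing_all (P := fun q => adj q.1 q.2)) => // -[u v] /E_cochain_adj.
Qed.

Lemma pairing_E_cochain c : pairing E_cochain c = coef c (a, b) - coef c (b, a).
Proof.
by rewrite !coef_pairing /pairing -sumrB; apply: eq_bigr => p _; rewrite mulrBr.
Qed.

Lemma sum_E_cochain_sqr l :
  count is_E l = 1%N -> (\sum_(s <- l) E_cochain s) ^+ 2 = 1.
Proof.
move=> l1; rewrite (bigID is_E) /= [X in _ + X]big1 ?addr0 => [|s]; last first.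
  by rewrite /is_E negb_or /E_cochain => /andP[/negbTE-> /negbTE->].
rewrite -big_filter; have := size_filter is_E l; rewrite l1.
case E: [seq s <- l | is_E s] => [|s [|]] // _.
have : is_E s by have := mem_head s [::]; rewrite -E mem_filter => /andP[].
rewrite big_seq1 /E_cochain /is_E => /orP[]/eqP->;
  by rewrite !xpair_eqE !eqxx ?(negbTE neq_ab) ?(negbTE neq_ba).
Qed.

(* A triangle on {a, b} is replaced by degenerate triangles whose boundary
   agrees with its own except on the pairs (a, b) and (b, a). *)
Definition retract_triangle (p : int * (V * V * V)) : chain (V * V * V) :=
  let: (k, (x, y, z)) := p in
  if [&& adj x y, adj y z & adj x z] then [:: p]
  else [:: (if y == z then k else 0, (z, z, z));
           (if x == z then - k else 0, (z, z, z));
           (if x == y then k else 0, (y, y, y))].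

Definition retract (w : chain (V * V * V)) : chain (V * V * V) :=
  flatten (map retract_triangle w).

Lemma tri_chain_retract w : tri_chain adj (retract w).
Proof.
apply/allP => p /flattenP[ps /mapP[[k [[x y] z]] _ ->]] /=.
case: ifP => [xyz | _]; first by rewrite inE => /eqP->.
by rewrite !inE => /or3P[]/eqP->; rewrite /= !adj_refl.
Qed.

Lemma pairing_retract f w : tri_chain adjE w ->
  pairing (cobd2 f) (retract w) = pairing (cobd2 (mask_E f)) w.
Proof.
move=> Tw; rewrite /pairing /retract big_flatten big_map; apply: eq_big_seq.
move=> [k [[x y] z]] /(allP Tw) /and3P[/= xy yz xz].
case: ifP => [/and3P[xy' yz' xz'] | notG].
  by rewrite big_seq1 /cobd2 /= !mask_E_adj.
have [xyz | [xab yab zab]] := add_edge_triangle xy yz xz; first by rewrite xyz in notG.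
rewrite !big_cons big_nil /cobd2 /= !mask_E_ab //.
by case: (y == z); case: (x == z); case: (x == y); ring.
Qed.

Lemma boundary_retract z :
  edge_chain adj z -> is_boundary adjE z -> is_boundary adj z.
Proof.
move=> Ez [w [Tw /chain_eqP zw]]; exists (retract w).
split; first exact: tri_chain_retract.
apply/chain_eqP => f; rewrite pairing_bd2 pairing_retract // -pairing_bd2 -zw.
by apply: (eq_pairing_all (P := fun q => adj q.1 q.2)) => // -[u v] /mask_E_adj.
Qed.

Definition E_free_part (y : chain (V * V)) : chain (V * V) :=
  [seq p <- y | ~~ is_E p.2] ++ [:: (coef y (a, b), (a, a))].

(* Its boundary is [b, a] - [a, a] + [a, b]. *)
Definition E_filler (y : chain (V * V)) : chain (V * V * V) :=
  [:: (coef y (a, b), (a, b, a))].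

Lemma edge_chain_E_free_part y :
  edge_chain adjE y -> edge_chain adj (E_free_part y).
Proof.
move=> Ey; rewrite /edge_chain /E_free_part all_cat all_seq1 /= adj_refl andbT.
rewrite all_filter.
by apply/allP => -[k [u v]] /(allP Ey) /= uv; apply/implyP; apply: add_edge_adj.
Qed.

Lemma tri_chain_E_filler y : tri_chain adjE (E_filler y).
Proof. by rewrite /tri_chain /= /add_edge !eqxx adj_refl !orbT. Qed.

Lemma E_free_part_homologous y : pairing E_cochain y = 0 ->
  chain_eq y (E_free_part y ++ bd2 (E_filler y)).
Proof.
rewrite pairing_E_cochain => /eqP; rewrite subr_eq0 => /eqP ab_ba.
apply/chain_eqP => f; rewrite (pairing_split2 f y neq_ab_ba).
rewrite pairing_cat pairing_bd2 pairing_cat.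
by rewrite /pairing !big_seq1 -ab_ba /cobd2 /=; ring.
Qed.

Lemma E_free_part_cycle y :
  is_cycle1 y -> pairing E_cochain y = 0 -> is_cycle1 (E_free_part y).
Proof.
move=> /is_cycle1P cy /E_free_part_homologous /chain_eqP yE; apply/is_cycle1P => g.
by have := yE (cobd1 g); rewrite cy pairing_cat pairing_bd2 cobd2_cobd1_pairing addr0.
Qed.

Lemma cycle_decomposition C z :
  closed_walk adjE C -> traversals a b C = 1%N -> edge_chain adjE z -> is_cycle1 z ->
  exists (zG : chain (V * V)) (n : int),
    [/\ edge_chain adj zG, is_cycle1 zG &
        is_boundary adjE (z ++ chain_scale (-1) (zG ++ chain_scale n (walk_chain C)))].
Proof.
move=> closedC onceC Ez Cz; set sg := pairing E_cochain (walk_chain C).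
have sg2 : sg ^+ 2 = 1 by rewrite /sg pairing_walk_chain; exact: sum_E_cochain_sqr onceC.
set n := sg * pairing E_cochain z; set y := z ++ chain_scale (- n) (walk_chain C).
have Ey : edge_chain adjE y.
  by rewrite edge_chain_cat edge_chain_scale Ez edge_chain_walk.
have Cy : is_cycle1 y by apply: is_cycle1_cat_scale Cz (walk_chain_cycle C).
have y0 : pairing E_cochain y = 0.
  rewrite pairing_cat pairing_scale -/sg /n.
  have -> : pairing E_cochain z + - (sg * pairing E_cochain z) * sg
            = pairing E_cochain z * (1 - sg ^+ 2) by ring.
  by rewrite sg2 subrr mulr0.
exists (E_free_part y), n; split.
- exact: edge_chain_E_free_part Ey.
- exact: E_free_part_cycle Cy y0.
exists (E_filler y); split; first exact: tri_chain_E_filler.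
apply/chain_eqP => f; have /chain_eqP/(_ f) := E_free_part_homologous y0.
rewrite [pairing f y]pairing_cat pairing_scale pairing_cat => yE.
rewrite -[RHS](addKr (pairing f (E_free_part y))) -yE.
by rewrite pairing_cat pairing_scale pairing_cat pairing_scale; ring.
Qed.

Lemma walk_coefficient_eq0 C zG n :
  traversals a b C = 1%N -> edge_chain adj zG ->
  is_boundary adjE (zG ++ chain_scale n (walk_chain C)) -> n = 0.
Proof.
move=> onceC EzG /pairing_E_cochain_boundary.
rewrite pairing_cat pairing_scale pairing_E_cochain_edge_chain // add0r => /eqP.
rewrite mulf_eq0 => /orP[/eqP // | /eqP sg0].
by have := sum_E_cochain_sqr onceC; rewrite -pairing_walk_chain sg0 expr0n.
Qed.
End AddEdge.

Theorem lemma7p4 (V : eqType) (adj : rel V) (a b : V) :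
  reflexive_graph adj -> connected adj -> dist_ge4 adj a b ->
  (* the inclusion-induced map H_1(G) -> H_1(G+E) is injective *)
  (forall z : chain (V * V), edge_chain adj z -> is_cycle1 z ->
     is_boundary (add_edge adj a b) z -> is_boundary adj z) /\
  (* for every closed walk C in G+E traversing E exactly once,
     H_1(G+E) = image of H_1(G) (+) <[C]>, with [C] of infinite order *)
  (forall C : seq V, closed_walk (add_edge adj a b) C -> traversals a b C = 1%N ->
     (forall z : chain (V * V), edge_chain (add_edge adj a b) z -> is_cycle1 z ->
        exists (zG : chain (V * V)) (n : int),
          [/\ edge_chain adj zG, is_cycle1 zG &
              is_boundary (add_edge adj a b)
                (z ++ chain_scale (-1) (zG ++ chain_scale n (walk_chain C)))]) /\
     (forall (zG : chain (V * V)) (n : int), edge_chain adj zG -> is_cycle1 zG ->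
        is_boundary (add_edge adj a b) (zG ++ chain_scale n (walk_chain C)) ->
        n = 0)).
Proof.
move=> [adj_refl adj_sym] _ dist_ab; split.
  by move=> z Ez _; apply: boundary_retract.
move=> C closedC onceC; split.
  by move=> z Ez Cz; apply: cycle_decomposition.
by move=> zG n EzG _; apply: walk_coefficient_eq0.
Qed.
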